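(* Let $J=p\ge1$, $\sigma_\varepsilon^2>0$, $\sigma_\gamma^2>0$, $0\le\rho\le1$, and let $\mathbf{\Sigma}_\gamma=\sigma_\gamma^2\big((1-\rho)\mathbf{I}_J+\rho\mathbf{1}_J\mathbf{1}_J^{\mathrm T}\big)$ (compound symmetry). Let $\mathbf{A}_{\bm\beta}$ be a nonsingular $J\times J$ matrix and $I>0$. For an approximate design $\xi=(I_1,\dots,I_J)$ (reals $I_j\ge0$ with $\sum_jI_j=I$) let $$\mathbf{M}_{\bm\beta}(\xi)=\mathbf{A}_{\bm\beta}^{\mathrm T}\mathbf{M}_0(\xi)^{1/2}\big(\sigma_\varepsilon^2\mathbf{I}_J+\mathbf{M}_0(\xi)^{1/2}\mathbf{\Sigma}_\gamma\mathbf{M}_0(\xi)^{1/2}\big)^{-1}\mathbf{M}_0(\xi)^{1/2}\mathbf{A}_{\bm\beta},\quad \mathbf{M}_0(\xi)^{1/2}=\mathrm{diag}(\sqrt{I_1},\dots,\sqrt{I_J}).$$ Then the uniform design $\xi^*=(I/J,\dots,I/J)$ is the $D$-optimal approximate design.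
   Context: $\mathbf{A}_{\bm\beta}$ is the Jacobian of the mean response curve at a fixed parameter $\bm\beta$. $\bm\beta$ is estimable under $\xi$ if $\mathbf{A}_{\bm\beta}$ has full column rank and its columns lie in the column space of $\mathrm{diag}(I_1,\dots,I_J)$. A design $\xi^*$ is $D$-optimal if $\log\det\mathbf{M}_{\bm\beta}(\xi^* )\ge\log\det\mathbf{M}_{\bm\beta}(\xi)$ for all approximate designs $\xi$ with total $I$ under which $\bm\beta$ is estimable. *)

From mathcomp Require Import all_boot all_order all_algebra.
From mathcomp Require Import all_classical all_reals all_analysis.
Set Implicit Arguments. Unset Strict Implicit. Unset Printing Implicit Defensive.
Import Order.TTheory GRing.Theory Num.Theory.
Local Open Scope ring_scope.

Section Defs.
Variables (R : realType) (J : nat).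

Definition approx_design (I : R) (xi : 'I_J -> R) : Prop :=
  (forall j, 0 <= xi j) /\ \sum_(j < J) xi j = I.

Definition M0 (xi : 'I_J -> R) : 'M[R]_J := diag_mx (\row_j xi j).
Definition M0half (xi : 'I_J -> R) : 'M[R]_J := diag_mx (\row_j Num.sqrt (xi j)).

Definition Sigma_gamma (sg2 rho : R) : 'M[R]_J :=
  sg2 *: ((1 - rho) *: (1%:M : 'M[R]_J) + rho *: const_mx 1).

Definition Mbeta (A : 'M[R]_J) (se2 sg2 rho : R) (xi : 'I_J -> R) : 'M[R]_J :=
  A^T *m M0half xi
      *m invmx (se2 *: 1%:M + M0half xi *m Sigma_gamma sg2 rho *m M0half xi)
      *m M0half xi *m A.

(* beta estimable under xi: A has full column rank and its columns lie in the
   column space of diag(I_1,...,I_J) *)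
Definition estimable (A : 'M[R]_J) (xi : 'I_J -> R) : Prop :=
  \rank A = J /\ (A^T <= (M0 xi)^T)%MS.

Definition uniform_design (I : R) : 'I_J -> R := fun _ => I / J%:R.

Definition D_optimal (A : 'M[R]_J) (se2 sg2 rho I : R) (xis : 'I_J -> R) : Prop :=
  approx_design I xis /\ estimable A xis /\
  forall xi, approx_design I xi -> estimable A xi ->
    ln (\det (Mbeta A se2 sg2 rho xi)) <= ln (\det (Mbeta A se2 sg2 rho xis)).

End Defs.

From mathcomp Require Import all_boot all_order all_algebra.
From mathcomp Require Import all_classical all_reals all_analysis.
From mathcomp Require Import ring lra.
Import Order.TTheory GRing.Theory Num.Theory.
Local Open Scope ring_scope.
Set Implicit Arguments. Unset Strict Implicit. Unset Printing Implicit Defensive.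

(* For a design with all I_j > 0 put c_j = se2 + sg2 (1 - rho) I_j and s_j = sqrt I_j.
   The matrix inverted in M_beta is diag(c) + sg2 rho s s^T, so the matrix determinant
   lemma gives  det M_beta = det(A)^2 * prod_j f(I_j) / (1 + sg2 rho sum_j f(I_j))  with
   f(z) = z / (se2 + sg2 (1 - rho) z).  Since f is concave, sum_j f(I_j) <= J f(I/J)
   (tangent line at I/J); by AM-GM prod_j f(I_j) <= (sum_j f(I_j) / J)^J; and
   u |-> u^J / (1 + sg2 rho J u) is increasing, so the uniform design maximises the
   determinant.  Estimability forces every I_j > 0, as diag(I_j) must have full rank. *)

Lemma det_add1_mul (R : comPzRingType) n (u : 'cV[R]_n) (v : 'rV[R]_n) :
  \det (1%:M + u *m v) = 1 + (v *m u) 0 0.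
Proof.
pose B := block_mx (1%:M : 'M[R]_n) (- u) v (1%:M : 'M[R]_1).
have B_lu : B = block_mx 1%:M 0 v 1%:M *m block_mx 1%:M (- u) 0 (1%:M + v *m u).
  rewrite mulmx_block !mul1mx ?mul0mx ?mulmx0 ?mulmx1 ?addr0 ?add0r.
  by rewrite /B mulmxN addrCA addNr addr0.
have B_ul : B = block_mx (1%:M + u *m v) (- u) 0 1%:M *m block_mx 1%:M 0 v 1%:M.
  rewrite mulmx_block !mul1mx ?mul0mx ?mulmx0 ?mulmx1 ?addr0 ?add0r.
  by rewrite /B mulNmx addrK.
have := congr1 determinant B_lu; rewrite {1}B_ul !det_mulmx.
rewrite det_lblock det_ublock det_ublock !det1 !mul1r !mulr1.
by rewrite det_mx11 !mxE eqxx => ->.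
Qed.

Lemma det_diag_add_mul (F : fieldType) n (c : 'rV[F]_n) (u : 'cV[F]_n)
    (v : 'rV[F]_n) :
  (forall j, c 0 j != 0) ->
  \det (diag_mx c + u *m v) = \prod_j c 0 j * (1 + \sum_j v 0 j * u j 0 / c 0 j).
Proof.
move=> c_neq0; pose w := \col_j (u j 0 / c 0 j).
have -> : diag_mx c + u *m v = diag_mx c *m (1%:M + w *m v).
  rewrite mulmxDr mulmx1 mulmxA; congr (_ + _ *m _).
  by apply/matrixP => i j; rewrite mul_diag_mx !mxE ord1 mulrC divfK.
rewrite det_mulmx det_diag det_add1_mul mxE; congr (_ * (1 + _)).
by apply: eq_bigr => j _; rewrite !mxE mulrA.
Qed.

Lemma prod_le_mean_expn (F : numFieldType) n (y : 'I_n -> F) :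
  (forall j, 0 <= y j) -> \prod_j y j <= ((\sum_j y j) / n%:R) ^+ n.
Proof.
move=> y_ge0; have := (leif_AGM (A := predT) (fun j _ => y_ge0 j)).1.
by rewrite cardT size_enum_ord.
Qed.

Lemma ler_expSn_div (F : realFieldType) n (k s t : F) :
  0 <= k -> 0 <= s -> s <= t ->
  s ^+ n.+1 / (1 + k * s) <= t ^+ n.+1 / (1 + k * t).
Proof.
move=> k_ge0 s_ge0 le_st; have t_ge0 := le_trans s_ge0 le_st.
have den_gt0 z : 0 <= z -> 0 < 1 + k * z.
  by move=> z_ge0; have := mulr_ge0 k_ge0 z_ge0; lra.
rewrite ler_pdivlMr ?den_gt0 // mulrAC ler_pdivrMr ?den_gt0 //.
have le_pow : s ^+ n <= t ^+ n by rewrite lerXn2r ?nnegrE.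
have le_cross : k * s * t * s ^+ n <= k * s * t * t ^+ n.
  by rewrite ler_wpM2l // !mulr_ge0.
have le_pow1 : s * s ^+ n <= t * t ^+ n by rewrite ler_pM ?exprn_ge0.
rewrite !exprS; nra.
Qed.

Section InfoWeight.
Variables (F : realFieldType) (e a : F).
Hypotheses (e_gt0 : 0 < e) (a_ge0 : 0 <= a).

Definition info_weight (z : F) : F := z / (e + a * z).

Lemma info_weight_den_gt0 z : 0 <= z -> 0 < e + a * z.
Proof. by move=> z_ge0; have := mulr_ge0 a_ge0 z_ge0; have := e_gt0; lra. Qed.

Lemma info_weight_ge0 z : 0 <= z -> 0 <= info_weight z.
Proof. by move=> z_ge0; rewrite divr_ge0 // ltW // info_weight_den_gt0. Qed.

Lemma info_weight_gt0 z : 0 < z -> 0 < info_weight z.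
Proof. by move=> z_gt0; rewrite divr_gt0 // info_weight_den_gt0 // ltW. Qed.

Lemma info_weight_le_tangent z m : 0 <= z -> 0 <= m ->
  info_weight z <= info_weight m + e / (e + a * m) ^+ 2 * (z - m).
Proof.
move=> z_ge0 m_ge0; rewrite -subr_ge0 /info_weight.
have cz := info_weight_den_gt0 z_ge0; have cm := info_weight_den_gt0 m_ge0.
have -> : m / (e + a * m) + e / (e + a * m) ^+ 2 * (z - m) - z / (e + a * z)
    = a * e * (z - m) ^+ 2 / ((e + a * m) ^+ 2 * (e + a * z)).
  by field; rewrite !lt0r_neq0.
apply: divr_ge0; first by rewrite mulr_ge0 ?sqr_ge0 // mulr_ge0 // ltW.
by rewrite mulr_ge0 ?sqr_ge0 // ltW.
Qed.

Lemma sum_info_weight_le n (x : 'I_n.+1 -> F) : (forall j, 0 <= x j) ->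
  \sum_j info_weight (x j) <= info_weight ((\sum_j x j) / n.+1%:R) *+ n.+1.
Proof.
move=> x_ge0; set m := _ / _.
have m_ge0 : 0 <= m by rewrite divr_ge0 ?sumr_ge0.
apply: le_trans (ler_sum _ (fun j _ => info_weight_le_tangent (x_ge0 j) m_ge0)) _.
rewrite big_split sumr_const card_ord /= -mulr_sumr sumrB sumr_const card_ord.
by rewrite -[m *+ _]mulr_natr /m divfK ?pnatr_eq0 // subrr mulr0 addr0.
Qed.

End InfoWeight.

Section Dcriterion.
Variables (F : realFieldType) (e a b : F).
Hypotheses (e_gt0 : 0 < e) (a_ge0 : 0 <= a) (b_ge0 : 0 <= b).

Definition dcrit n (x : 'I_n -> F) : F :=
  \prod_j info_weight e a (x j) / (1 + b * \sum_j info_weight e a (x j)).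

Lemma dcrit_gt0 n (x : 'I_n -> F) : (forall j, 0 < x j) -> 0 < dcrit x.
Proof.
move=> x_gt0; rewrite divr_gt0 ?prodr_gt0 // => [j _|].
  exact: info_weight_gt0.
have : 0 <= \sum_j info_weight e a (x j).
  by rewrite sumr_ge0 // => j _; rewrite info_weight_ge0 // ltW.
by move/(mulr_ge0 b_ge0); lra.
Qed.

Lemma dcrit_le_uniform n (x : 'I_n -> F) : (0 < n)%N -> (forall j, 0 <= x j) ->
  dcrit x <= dcrit (fun _ : 'I_n => (\sum_j x j) / n%:R).
Proof.
case: n x => [//|n] x _ x_ge0; rewrite /dcrit prodr_const sumr_const card_ord.
set t := info_weight e a _; set S := \sum_j _.
have S_ge0 : 0 <= S by rewrite sumr_ge0 // => j _; rewrite info_weight_ge0.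
have mean_ge0 : 0 <= S / n.+1%:R by rewrite divr_ge0.
have mean_le : S / n.+1%:R <= t.
  by rewrite ler_pdivrMr // mulr_natr sum_info_weight_le.
have S_eq : b * S = b * n.+1%:R * (S / n.+1%:R).
  by rewrite -mulrA [_%:R * _]mulrC divfK ?pnatr_eq0.
apply: le_trans (_ : (S / n.+1%:R) ^+ n.+1 / (1 + b * n.+1%:R * (S / n.+1%:R)) <= _).
  rewrite -S_eq ler_wpM2r ?prod_le_mean_expn // => [|j].
    by rewrite invr_ge0; have := mulr_ge0 b_ge0 S_ge0; lra.
  by rewrite info_weight_ge0.
rewrite -[t *+ _]mulr_natr [t * _]mulrC [b * (_ * t)]mulrA.
apply: ler_expSn_div => //; exact: mulr_ge0.
Qed.

End Dcriterion.

Section InformationMatrix.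
Variables (R : realType) (n : nat) (se2 sg2 rho : R).
Hypotheses (se2_gt0 : 0 < se2) (sg2_ge0 : 0 <= sg2) (rho_le1 : rho <= 1).

Lemma info_cov_decomp (x : 'I_n -> R) : (forall j, 0 <= x j) ->
  se2 *: 1%:M + M0half x *m Sigma_gamma n sg2 rho *m M0half x =
  diag_mx (\row_j (se2 + sg2 * (1 - rho) * x j))
  + ((sg2 * rho) *: (\row_j Num.sqrt (x j))^T) *m \row_j Num.sqrt (x j).
Proof.
move=> x_ge0; apply/matrixP => i k.
rewrite /M0half /Sigma_gamma mul_diag_mx mul_mx_diag !mxE big_ord1 !mxE.
have := sqr_sqrtr (x_ge0 i); set s := Num.sqrt (x i) => <-.
by case: eqVneq => [<-|_] /=; rewrite -/s; ring.
Qed.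

Lemma det_info_cov (x : 'I_n -> R) : (forall j, 0 <= x j) ->
  \det (se2 *: 1%:M + M0half x *m Sigma_gamma n sg2 rho *m M0half x) =
  \prod_j (se2 + sg2 * (1 - rho) * x j)
  * (1 + sg2 * rho * \sum_j info_weight se2 (sg2 * (1 - rho)) (x j)).
Proof.
have a_ge0 : 0 <= sg2 * (1 - rho) by rewrite mulr_ge0 // subr_ge0.
move=> x_ge0; rewrite info_cov_decomp // det_diag_add_mul => [|j].
  congr (_ * (1 + _)); first by apply: eq_bigr => j _; rewrite mxE.
  rewrite mulr_sumr; apply: eq_bigr => j _; rewrite !mxE.
  by rewrite /info_weight mulrCA -mulrA -expr2 sqr_sqrtr ?x_ge0 //; ring.
by rewrite mxE lt0r_neq0 // info_weight_den_gt0.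
Qed.

Lemma det_Mbeta (A : 'M[R]_n) (x : 'I_n -> R) : (forall j, 0 <= x j) ->
  \det (Mbeta A se2 sg2 rho x)
  = \det A ^+ 2 * dcrit se2 (sg2 * (1 - rho)) (sg2 * rho) x.
Proof.
move=> x_ge0; rewrite /Mbeta !det_mulmx det_inv det_tr det_info_cov //.
rewrite /M0half det_diag /dcrit /info_weight prodf_div.
have <- : (\prod_j (\row_j Num.sqrt (x j)) 0 j) ^+ 2 = \prod_j x j.
  by rewrite -prodrXl; apply: eq_bigr => j _; rewrite mxE sqr_sqrtr.
by rewrite invfM; ring.
Qed.

End InformationMatrix.

Section Estimability.
Variables (R : realType) (n : nat).

Lemma estimable_design_gt0 (A : 'M[R]_n) (xi : 'I_n -> R) :
  (forall j, 0 <= xi j) -> estimable A xi -> forall j, 0 < xi j.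
Proof.
move=> xi_ge0 [rankA A_sub] j.
have : row_full (M0 xi).
  rewrite /row_full eqn_leq rank_leq_col -{1}rankA.
  by rewrite -mxrank_tr -[X in (_ <= X)%N]mxrank_tr mxrankS.
rewrite row_full_unit unitmxE unitfE /M0 det_diag (bigD1 j) //= mxE.
by rewrite mulf_eq0 negb_or lt_def xi_ge0 andbT => /andP[].
Qed.

Lemma estimable_unitmx (A : 'M[R]_n) (xi : 'I_n -> R) :
  A \in unitmx -> (forall j, xi j != 0) -> estimable A xi.
Proof.
move=> A_unit xi_neq0; split; first exact: mxrank_unit.
rewrite submx_full // row_full_unit unitmx_tr unitmxE unitfE /M0 det_diag.
by apply/prodf_neq0 => j _; rewrite mxE.
Qed.

Lemma uniform_design_approx (I : R) : (0 < n)%N -> 0 <= I ->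
  approx_design I (@uniform_design R n I).
Proof.
move=> n_gt0 I_ge0; split=> [j|]; first by rewrite divr_ge0.
by rewrite sumr_const card_ord -[I / _ *+ _]mulr_natr divfK // pnatr_eq0 -lt0n.
Qed.

End Estimability.

Theorem lemma4 (R : realType) (J : nat) (hJ : (0 < J)%N)
  (se2 sg2 rho I : R) (hse : 0 < se2) (hsg : 0 < sg2)
  (hrho0 : 0 <= rho) (hrho1 : rho <= 1)
  (A : 'M[R]_J) (hA : A \in unitmx) (hI : 0 < I) :
  D_optimal A se2 sg2 rho I (@uniform_design R J I).
Proof.
have uniform_gt0 j : 0 < @uniform_design R J I j by rewrite divr_gt0 ?ltr0n.
have uniform_ge0 j : 0 <= @uniform_design R J I j by rewrite ltW.
have sg2_ge0 := ltW hsg.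
have a_ge0 : 0 <= sg2 * (1 - rho) by rewrite mulr_ge0 // subr_ge0.
have b_ge0 : 0 <= sg2 * rho by rewrite mulr_ge0.
have detA2_gt0 : 0 < \det A ^+ 2.
  by rewrite exprn_even_gt0 // -unitfE -unitmxE hA orbT.
split; first exact: uniform_design_approx (ltW hI).
split; first by apply: estimable_unitmx => // j; rewrite lt0r_neq0.
move=> xi [xi_ge0 sum_xi] xi_est.
have xi_gt0 := estimable_design_gt0 xi_ge0 xi_est.
rewrite !det_Mbeta //.
rewrite ler_ln ?posrE ?(mulr_gt0 detA2_gt0) ?dcrit_gt0 // ler_pM2l //.
by rewrite /uniform_design -sum_xi dcrit_le_uniform.
Qed.
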